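(* Let $T\subset V$ be an open cone with basepoint $b\in T$, and let $x\in\partial T\setminus[0]_T$. If a sequence $(x_n)$ in $T$ converges to $x$ in the usual topology of $V$, then it converges in the reverse Funk sense to $r_{T,x}$, i.e. $RF_T(\cdot,x_n)-RF_T(b,x_n)\to r_{T,x}$ pointwise on $T$.
   Context: $V$ is a finite-dimensional real vector space. An open cone is a nonempty open convex set $T\subset V$ with $\lambda T\subseteq T$ for all $\lambda>0$ and $0\notin T$; $\partial T$ its boundary. Write $x\le_T y$ iff $y-x\in\overline T$, $[0]_T:=\overline T\cap(-\overline T)$. $M_T(y/x):=\inf\{\lambda>0:y\le_T\lambda x\}$ for $y\in V,x\in T$, $F_T(y,x):=\log M_T(y/x)$, and the (extended) reverse Funk function $RF_T(x,y):=\log M_T(y/x)$ for $x\in T$, $y\in V$. For $p\in\partial T\setminus[0]_T$, $r_{T,p}(x):=RF_T(x,p)-RF_T(b,p)$, $x\in T$. *)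

(* V = 'rV[R]_n with R : realType (any finite-dim real space). *)
From HB Require Import structures.
From mathcomp Require Import all_boot all_order all_algebra.
From mathcomp Require Import all_classical all_reals all_analysis.
Set Implicit Arguments. Unset Strict Implicit. Unset Printing Implicit Defensive.
Import Order.TTheory GRing.Theory Num.Theory.
Import numFieldNormedType.Exports.
Local Open Scope classical_set_scope.
Local Open Scope ring_scope.

Section ConeDefs.
Variables (R : realType) (n : nat).
Local Notation V := 'rV[R]_n.

Definition open_cone (T : set V) : Prop :=
  [/\ T !=set0, open T,
      (forall x y (t : R), T x -> T y -> 0 <= t <= 1 -> T (t *: x + (1 - t) *: y)),
      (forall x (l : R), T x -> 0 < l -> T (l *: x)) & ~ T 0].

Definition cle (T : set V) (x y : V) : Prop := closure T (y - x).

Definition zero_part (T : set V) : set V :=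
  [set z | closure T z /\ closure T (- z)].

Definition cone_boundary (T : set V) : set V := closure T `\` interior T.

Definition MT (T : set V) (y x : V) : R :=
  inf [set l : R | 0 < l /\ cle T y (l *: x)].

(* F_T(y,x) = RF_T(x,y) = log M_T(y/x), with log 0 = -oo (extended) *)
Definition RF (T : set V) (x y : V) : \bar R :=
  if 0 < MT T y x then (ln (MT T y x))%:E else -oo%E.

Definition rfun (T : set V) (b p : V) (x : V) : \bar R :=
  (RF T x p - RF T b p)%E.

End ConeDefs.

From HB Require Import structures.
From mathcomp Require Import all_boot all_order all_algebra.
From mathcomp Require Import all_classical all_reals all_analysis.
From mathcomp Require Import lra.
Set Implicit Arguments. Unset Strict Implicit. Unset Printing Implicit Defensive.
Import Order.TTheory GRing.Theory Num.Theory.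
Import numFieldNormedType.Exports.
Local Open Scope classical_set_scope.
Local Open Scope ring_scope.

(* For fixed y in T, a ball of radius r around y lies in T, which makes
   v |-> M_T(v/y) 1/r-Lipschitz on the whole space, hence continuous.  If x is
   a boundary point outside [0]_T then M_T(x/y) > 0: otherwise x <=_T l y for
   arbitrarily small l > 0, which puts -x in the closure of T. *)

Section OpenCone.
Variables (R : realType) (n : nat) (T : set 'rV[R]_n).
Hypothesis coneT : open_cone T.

Lemma open_cone_ball y :
  T y -> exists2 r : R, 0 < r & forall w, `|w| <= r -> T (y + w).
Proof.
case: coneT => _ openT _ _ _ Ty.
have /nbhs_normP [e /= e0 He] : nbhs y T by move: openT; rewrite openE; apply.
exists (e / 2); first by rewrite divr_gt0.
move=> w hw; apply: He => /=.
rewrite opprD addrA subrr add0r normrN.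
by apply: (le_lt_trans hw); rewrite ltr_pdivrMr // ltr_pMr // ltr1n.
Qed.

Lemma open_cone_addr s t : T s -> T t -> T (s + t).
Proof.
case: coneT => _ _ convT scaleT _ Ts Tt.
have -> : s + t = 2 *: ((2^-1 : R) *: s + (1 - 2^-1) *: t).
  rewrite scalerDr !scalerA mulrBr mulr1 divff ?pnatr_eq0 //.
  have -> : (2 : R) - 1 = 1 by rewrite -[2]/(1 + 1)%:R natrD addrK.
  by rewrite !scale1r.
apply: scaleT => //; apply: convT => //.
by rewrite invr_ge0 ler0n /= invf_le1 // ler1n.
Qed.

Lemma closure_open_cone_addr c t : closure T c -> T t -> T (c + t).
Proof.
move=> Tc Tt; have [r r0 ballT] := open_cone_ball Tt.
have [s [Ts]] := Tc _ (nbhsx_ballx c r r0).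
rewrite -ball_normE /= => cs.
have -> : c + t = s + (t + (c - s)).
  by rewrite [RHS]addrCA [s + _]addrC subrK addrC.
by apply: open_cone_addr => //; apply: ballT; apply: ltW.
Qed.

Lemma MT_set_neq0 v y : T y -> [set l : R | 0 < l /\ cle T v (l *: y)] !=set0.
Proof.
move=> Ty; have [r r0 ballT] := open_cone_ball Ty.
case: coneT => _ _ _ scaleT _.
set l := `|v| / r + 1.
have l0 : 0 < l by rewrite ltr_wpDl // divr_ge0 // ltW.
exists l; split => //; apply: subset_closure.
have -> : l *: y - v = l *: (y + (- l^-1) *: v).
  by rewrite scalerDr scalerA mulrN divff ?gt_eqF // scaleN1r.
apply: scaleT => //; apply: ballT.
rewrite normrZ normrN normfV gtr0_norm // mulrC ler_pdivrMr //.
by rewrite /l mulrDr mulr1 mulrCA divff ?gt_eqF // mulr1 lerDl ltW.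
Qed.

Lemma MT_ge0 v y : T y -> 0 <= MT T v y.
Proof.
by move=> Ty; apply: lb_le_inf; [exact: MT_set_neq0 | move=> l [/ltW]].
Qed.

(* v <=_T l y and a perturbation of size d*r of y stays in T give
   v' <=_T (l + d) y with d = |v - v'| / r. *)
Lemma MT_lipschitz v v' y (r : R) : T y -> 0 < r ->
  (forall w, `|w| <= r -> T (y + w)) ->
  MT T v' y <= MT T v y + `|v - v'| / r.
Proof.
move=> Ty r0 ballT; case: (coneT) => _ _ _ scaleT _.
rewrite -lerBlDr; apply: lb_le_inf; first exact: MT_set_neq0.
move=> l [l0 vly]; rewrite lerBlDr.
set d := `|v - v'| / r.
have d0 : 0 <= d by rewrite divr_ge0 // ltW.
have lbT : has_lbound [set l : R | 0 < l /\ cle T v' (l *: y)].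
  by exists 0 => z [/ltW].
apply: (ge_inf lbT); split; first by rewrite ltr_wpDr.
rewrite /cle.
have [vv'|vv'] := eqVneq v v'; first by rewrite /d -vv' subrr normr0 mul0r addr0.
have dp : 0 < d by rewrite divr_gt0 // normr_gt0 subr_eq0.
have -> : (l + d) *: y - v' = (l *: y - v) + d *: (y + (- d^-1) *: (v' - v)).
  rewrite scalerDr scalerA mulrN divff ?gt_eqF // scaleN1r scalerDl.
  by rewrite opprB addrACA addKr.
apply/subset_closure/closure_open_cone_addr => //.
apply: scaleT => //; apply: ballT.
rewrite normrZ normrN normfV gtr0_norm // [`|v' - v|]distrC /d.
by rewrite invfM invrK mulrAC mulVf ?mul1r // normr_eq0 subr_eq0.
Qed.

Lemma MT_cvg x y (u : nat -> 'rV[R]_n) : T y -> u @ \oo --> x ->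
  (fun k => MT T (u k) y) @ \oo --> MT T x y.
Proof.
move=> Ty ux; have [r r0 ballT] := open_cone_ball Ty.
apply/cvgrPdist_lt => e e0.
have er : 0 < e * r by rewrite mulr_gt0.
move/cvgrPdist_lt : ux => /(_ _ er); apply: filterS => k uxk.
have h1 := MT_lipschitz (u k) x Ty r0 ballT.
have h2 := MT_lipschitz x (u k) Ty r0 ballT.
have hd : `|x - u k| / r < e by rewrite ltr_pdivrMr.
move: h1 h2 hd; rewrite [`|u k - x|]distrC.
move: (MT T x y) (MT T (u k) y) (`|x - u k| / r) => a b d h1 h2 hd.
by rewrite ltr_norml; apply/andP; split; lra.
Qed.

Lemma MT_gt0 x y :
  T y -> closure T x -> ~ zero_part T x -> 0 < MT T x y.
Proof.
move=> Ty Tx nzx; rewrite lt_def MT_ge0 // andbT.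
apply/negP => /eqP M0; apply: nzx; split => // B /nbhs_normP [e /= e0 He].
have yp : 0 < `|y| + 1 by rewrite ltr_wpDl.
set c := e / 2 / (`|y| + 1).
have c0 : 0 < c by rewrite !divr_gt0.
have [l [l0 xly] lc] : exists2 l, (0 < l /\ cle T x (l *: y)) & l < c.
  by apply: inf_lt; [exact: MT_set_neq0 | rewrite -/(MT T x y) M0].
have e20 : 0 < e / 2 by rewrite divr_gt0.
have [t [Tt]] := xly _ (nbhsx_ballx _ _ e20).
rewrite -ball_normE /= => xt.
exists t; split => //; apply: He => /=.
have -> : - x - t = (l *: y - x - t) - l *: y by rewrite [RHS]addrC addrA addKr.
apply: (le_lt_trans (ler_normB _ _)).
have ly : `|l *: y| < e / 2.
  rewrite normrZ gtr0_norm //; apply: (le_lt_trans (y := l * (`|y| + 1))).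
    by rewrite ler_pM2l // lerDl.
  by rewrite -ltr_pdivlMr.
by rewrite (splitr e) ltrD.
Qed.

End OpenCone.

Lemma RF_gt0 (R : realType) (n : nat) (T : set 'rV[R]_n) (w v : 'rV[R]_n) :
  0 < MT T v w -> RF T w v = (ln (MT T v w))%:E.
Proof. by rewrite /RF => ->. Qed.

Theorem mainTheorem15 (R : realType) (n : nat) (T : set 'rV[R]_n)
    (b x : 'rV[R]_n) (u : nat -> 'rV[R]_n) :
  open_cone T -> T b ->
  cone_boundary T x -> ~ zero_part T x ->
  (forall k, T (u k)) -> u @ \oo --> x ->
  forall y, T y ->
    (fun k => (RF T y (u k) - RF T b (u k))%E) @ \oo --> rfun T b x y.
Proof.
move=> coneT Tb [Tx _] nzx _ ux y Ty.
have My := MT_gt0 coneT Ty Tx nzx; have Mb := MT_gt0 coneT Tb Tx nzx.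
have cy := MT_cvg coneT Ty ux; have cb := MT_cvg coneT Tb ux.
pose g k := ln (MT T (u k) y) - ln (MT T (u k) b).
have gE : \forall k \near \oo, (EFin \o g) k = (RF T y (u k) - RF T b (u k))%E.
  apply: filterS2 (cvgr_gt _ cy 0 My) (cvgr_gt _ cb 0 Mb) => k My' Mb'.
  by rewrite /= (RF_gt0 My') (RF_gt0 Mb') EFinB.
have lny := cvg_comp _ _ cy (continuous_ln My).
have lnb := cvg_comp _ _ cb (continuous_ln Mb).
rewrite /rfun (RF_gt0 My) (RF_gt0 Mb) -EFinB.
apply: cvg_trans (near_eq_cvg gE) _; apply: cvg_EFin; first exact: nearW.
exact: cvgB lny lnb.
Qed.
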